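(* Let $S$ be an idempotent semiring and define the relation $\sigma^*$ on $S$ by: $a\,\sigma^*\, b$ if and only if there exists $x\in S$ such that $axbxa=axbxa+a+axbxa$ and $bxaxb=bxaxb+b+bxaxb$. Then $\sigma^*$ is the least distributive lattice congruence on $S$.
   Context: An idempotent semiring is an algebra $(S,+,\cdot)$ with two binary operations such that $(S,+)$ and $(S,\cdot)$ are bands (associative, with $x+x=x$ and $xx=x$), and both distributive laws $x(y+z)=xy+xz$ and $(x+y)z=xz+yz$ hold; addition is not assumed commutative. A distributive lattice congruence on $S$ is a congruence $\rho$ such that $S/\rho$ is a distributive lattice, i.e. $S/\rho$ satisfies $x+y\approx y+x$, $xy\approx yx$ and $x+xy\approx x$. *)

From Stdlib Require Import Relations.
Set Implicit Arguments.

(* An idempotent semiring: (S,+) and (S,.) are bands (associative,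
   idempotent), both distributive laws hold; + is not assumed commutative. *)
Record idem_semiring (S : Type) (add mul : S -> S -> S) : Prop := {
  add_assoc : forall x y z, add x (add y z) = add (add x y) z;
  add_idem  : forall x, add x x = x;
  mul_assoc : forall x y z, mul x (mul y z) = mul (mul x y) z;
  mul_idem  : forall x, mul x x = x;
  distr_l   : forall x y z, mul x (add y z) = add (mul x y) (mul x z);
  distr_r   : forall x y z, mul (add x y) z = add (mul x z) (mul y z)
}.

Definition congruence (S : Type) (add mul : S -> S -> S) (rho : relation S)
  : Prop :=
  equivalence S rho /\
  (forall a b c d, rho a b -> rho c d -> rho (add a c) (add b d)) /\
  (forall a b c d, rho a b -> rho c d -> rho (mul a c) (mul b d)).

Definition dl_congruence (S : Type) (add mul : S -> S -> S) (rho : relation S)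
  : Prop :=
  congruence add mul rho /\
  (forall x y, rho (add x y) (add y x)) /\
  (forall x y, rho (mul x y) (mul y x)) /\
  (forall x y, rho (add x (mul x y)) x).

Definition sigma_star (S : Type) (add mul : S -> S -> S) (a b : S) : Prop :=
  exists x : S,
    let p := mul a (mul x (mul b (mul x a))) in
    let q := mul b (mul x (mul a (mul x b))) in
    p = add (add p a) p /\ q = add (add q b) q.

(* Write [u <=J v] for Green's J-order [u + v + u = u] of the additive band.
   The conditions defining [sigma_star] say exactly [a x b x a <=J a] and
   [b x a x b <=J b].  Multiplication is monotone for [<=J] and [g + h <=J g h];
   from these, [x Y x Z x] and [x Y Z x] are J-equivalent, which lets a right
   factor [c] pass through the sandwich [a x b x a], giving compatibility with
   multiplication.  Compatibility with addition, transitivity (witness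
   [x + b + y]) and the three lattice identities only use monotonicity of the
   sandwich in its three arguments.  Minimality: modulo a distributive lattice
   congruence, [p = p + a + p] with [p = a y] collapses to [p = a], and both
   sandwiches reduce to [a b x]. *)

From Stdlib Require Import Relations Morphisms.
From Corelib Require Import ssreflect.
Set Implicit Arguments.

Section Band.
Context {S : Type} {op : S -> S -> S}.
Hypothesis opA : forall x y z, op x (op y z) = op (op x y) z.
Hypothesis opI : forall x, op x x = x.

Lemma band_idem1 a r : op a (op a r) = op a r.
Proof. by rewrite opA opI. Qed.

Lemma band_idem2 a b r : op a (op b (op a (op b r))) = op a (op b r).
Proof. by rewrite (opA a b (op a (op b r))) (opA a b r) opA opI. Qed.

Lemma band_absorb a b : op a (op b (op a b)) = op a b.
Proof. by rewrite (opA a b) opI. Qed.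

Lemma band_idem3 a b c r :
  op a (op b (op c (op a (op b (op c r))))) = op a (op b (op c r)).
Proof.
transitivity (op (op (op a b) c) (op (op (op a b) c) r)); first by rewrite !opA.
by rewrite band_idem1 !opA.
Qed.

Definition jle u v := u = op (op u v) u.

Lemma jle_refl u : jle u u.
Proof. by rewrite /jle !opI. Qed.

Lemma jle_op_invl x y z : jle x (op y z) -> jle x y.
Proof.
rewrite /jle opA => Hx; move: (op x y) Hx => g Hx.
by rewrite {2}Hx !opA opI -Hx.
Qed.

Lemma jle_op_invr x y z : jle x (op z y) -> jle x y.
Proof.
rewrite /jle opA => Hx.
by rewrite -opA {2}Hx -!opA band_absorb !opA -Hx.
Qed.

Lemma jle_trans u v w : jle u v -> jle v w -> jle u w.
Proof.
move=> Huv Hvw; apply: (@jle_op_invr _ _ v); apply: (@jle_op_invl _ _ v).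
by rewrite /jle -Hvw.
Qed.

Lemma jle_op u a b : jle u a -> jle u b -> jle u (op a b).
Proof.
move=> Ha Hb.
(* [u a <=J b u] since [u <=J b]; then [u = u a u = u a b u a u = u a b u]. *)
have HAB : jle (op u a) (op b u).
  by apply: (@jle_op_invr _ _ u); rewrite /jle (opA u b u) -Hb -Ha band_idem1.
transitivity (op (op (op (op u a) (op b u)) (op u a)) u); first by rewrite -HAB.
by rewrite -(opA _ (op u a)) -Ha -!opA opI.
Qed.

Lemma jle_opl a b : jle (op a b) a.
Proof. by rewrite /jle -!opA band_idem1 band_absorb. Qed.

Lemma jle_opr a b : jle (op a b) b.
Proof. by rewrite /jle -!opA band_idem1 band_absorb. Qed.

End Band.

Arguments jle {S} op u v.

Section IdempotentSemiring.
Variables (S : Type) (add mul : S -> S -> S).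
Hypothesis HS : idem_semiring add mul.
Local Notation "x + y" := (add x y).
Local Notation "x * y" := (mul x y).
Local Notation "u <=J v" := (jle add u v) (at level 70).

Let addA := add_assoc HS.
Let addI := add_idem HS.
Let mulA := mul_assoc HS.
Let mulI := mul_idem HS.
Let mulDl := distr_r HS.
Let mulDr := distr_l HS.
Let jleJ := jle_refl addI.
Let jleT := jle_trans addA addI.
Let jleD := jle_op addA addI.
Let jleDl := jle_opl addA addI.
Let jleDr := jle_opr addA addI.
Let mul_idem1 := band_idem1 mulA mulI.
Let mul_idem2 := band_idem2 mulA mulI.
Let mul_idem3 := band_idem3 mulA mulI.
Let mul_absorb := band_absorb mulA mulI.

Lemma jle_mull w u v : u <=J v -> w * u <=J w * v.
Proof. by rewrite /jle -!mulDr => <-. Qed.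

Lemma jle_mulr w u v : u <=J v -> u * w <=J v * w.
Proof. by rewrite /jle -!mulDl => <-. Qed.

Lemma jle_mul u v u' v' : u <=J v -> u' <=J v' -> u * u' <=J v * v'.
Proof.
by move=> H H'; apply: (jleT (jle_mulr u' H)); apply: jle_mull.
Qed.

Lemma jle_add_mul g h : g + h <=J g * h.
Proof.
(* [g + h = (g + h)(g + h) = g + g h + h g + h]. *)
rewrite -{1}(mulI (g + h)) mulDl !mulDr.
exact: jleT (jleDl _ _) (jleDr _ _).
Qed.

Lemma jle_mul_mid s u g h w :
  s <=J u * (g * w) -> s <=J u * (h * w) -> s <=J u * ((g * h) * w).
Proof.
move=> Hg Hh; apply: (jleT _ (jle_mull u (jle_mulr w (jle_add_mul g h)))).
by rewrite mulDl mulDr; apply: jleD.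
Qed.

Lemma jle_sandwich_drop x Y Z : x * (Y * (x * (Z * x))) <=J x * (Y * (Z * x)).
Proof.
have -> : x * (Y * (x * (Z * x))) = (x * Y) * ((x * ((Y + Z) * x)) * (Z * x)).
  by rewrite !(mulDl, mulDr) -!mulA mul_idem2 (mul_idem2 x Z) addI.
have <- : (x * Y) * ((x * ((Y * Z) * x)) * (Z * x)) = x * (Y * (Z * x)).
  by rewrite -!mulA mul_idem2 mul_absorb.
exact/jle_mull/jle_mulr/jle_mull/jle_mulr/jle_add_mul.
Qed.

Lemma jle_sandwich_insert x Y Z : x * (Y * (Z * x)) <=J x * (Y * (x * (Z * x))).
Proof.
set s := x * (Y * (Z * x)).
have H1 : s <=J (x * Y) * ((x * Z) * (Y * (Z * x))).
  apply: jle_mul_mid; rewrite -!mulA; [rewrite mul_idem2 | rewrite (mul_idem2 Y Z)];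
  exact: jleJ.
have H2 : s <=J (x * (Y * Z)) * ((Y * x) * (Z * x)).
  apply: jle_mul_mid; rewrite -!mulA; [rewrite (mul_idem2 Y Z) | rewrite mul_absorb];
  exact: jleJ.
have <- : x * (((Y * (x * (Z * Y))) * (Y * (Z * (Y * x)))) * (Z * x))
          = x * (Y * (x * (Z * x))).
  by rewrite -!mulA mul_idem1 (mul_idem2 Z Y) mul_idem3.
by apply: jle_mul_mid; rewrite -!mulA; rewrite -!mulA in H1 H2.
Qed.

Definition sandwich a x b := a * (x * (b * (x * a))).

Definition sigma_half x a b := sandwich a x b <=J a.

Lemma sigma_starE a b :
  sigma_star add mul a b <-> exists x, sigma_half x a b /\ sigma_half x b a.
Proof. exact: iff_refl. Qed.

Lemma sandwich_mono A a z x B b :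
  A <=J a -> z <=J x -> B <=J b -> sandwich A z B <=J sandwich a x b.
Proof. by move=> HA Hz HB; repeat apply: jle_mul. Qed.

Lemma sandwich_idem a : sandwich a a a = a.
Proof. by rewrite /sandwich !mulI. Qed.

Lemma sigma_half_mono w x a b : w <=J x -> sigma_half x a b -> sigma_half w a b.
Proof. by move=> Hw; apply: jleT; apply: sandwich_mono. Qed.

Lemma sigma_half_trans z a b c :
  z <=J b -> sigma_half z a b -> sigma_half z b c -> sigma_half z a c.
Proof.
move=> Hzb Hab Hbc; apply: (jleT _ Hab).
apply: (jleT _ (jle_mull a (jle_mull z (jle_mulr (z * a) Hbc)))).
have zbz : z <=J z * (b * z) by move: (jle_mull z (jle_mulr z Hzb)); rewrite !mulI.
have -> : a * (z * (sandwich b z c * (z * a)))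
          = a * ((z * (b * z)) * (c * ((z * (b * z)) * a))).
  by rewrite /sandwich -!mulA.
by apply/jle_mull/jle_mul/jle_mull/jle_mulr.
Qed.

Lemma sigma_half_mulr x a b c : sigma_half x a b -> sigma_half x (a * c) (b * c).
Proof.
move=> Hab; rewrite /sigma_half.
have drop : sandwich (a * c) x (b * c) <=J a * (c * ((x * b) * ((x * a) * c))).
  by move: (jle_mull a (jle_sandwich_drop c (x * b) (x * a))); rewrite /sandwich -!mulA.
have insert : a * (c * ((x * b) * ((x * a) * c))) <=J (a * c) * (sandwich a x b * c).
  by move: (jle_mulr c (jle_sandwich_insert a c (x * (b * x)))); rewrite /sandwich -!mulA.
apply: (jleT drop); apply: (jleT insert).
by rewrite -{2}(mulI (a * c)); apply/jle_mull/jle_mulr.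
Qed.

Lemma sandwich_jle A z B a : A <=J a -> z <=J a -> B <=J a -> sandwich A z B <=J a.
Proof.
by move=> HA Hz HB; rewrite -[X in _ <=J X]sandwich_idem; apply: sandwich_mono.
Qed.

Lemma sigma_half_addr x a b c : sigma_half x a b -> sigma_half (c + x) (a + c) (b + c).
Proof.
move=> Hab; apply: jleD; last by apply: sandwich_jle.
by apply: (jleT _ Hab); apply: sandwich_mono.
Qed.

Lemma sigma_half_add_swap w a b : w <=J a -> w <=J b -> sigma_half w (a + b) (b + a).
Proof. by move=> Ha Hb; apply: jleD; apply: sandwich_jle. Qed.

Local Notation sigma := (sigma_star add mul).

Lemma sigma_refl a : sigma a a.
Proof. by apply/sigma_starE; exists a; rewrite /sigma_half sandwich_idem; split. Qed.

Lemma sigma_sym a b : sigma a b -> sigma b a.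
Proof. by move/sigma_starE=> [x [Hab Hba]]; apply/sigma_starE; exists x. Qed.

Lemma sigma_trans a b c : sigma a b -> sigma b c -> sigma a c.
Proof.
move/sigma_starE=> [x [Hab Hba]] /sigma_starE [y [Hbc Hcb]].
have zx : x + b + y <=J x := jleT (jleDl _ _) (jleDl _ _).
have zb : x + b + y <=J b := jleT (jleDl _ _) (jleDr _ _).
have zy : x + b + y <=J y := jleDr _ _.
apply/sigma_starE; exists (x + b + y); split; apply: (sigma_half_trans zb).
- exact: sigma_half_mono zx Hab.
- exact: sigma_half_mono zy Hbc.
- exact: sigma_half_mono zy Hcb.
- exact: sigma_half_mono zx Hba.
Qed.

Lemma sigma_add_comm a b : sigma (a + b) (b + a).
Proof.
apply/sigma_starE; exists (a + b).
by split; apply: sigma_half_add_swap;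
  [apply: jleDl | apply: jleDr | apply: jleDr | apply: jleDl].
Qed.

Lemma sigma_mul_comm a b : sigma (a * b) (b * a).
Proof.
apply/sigma_starE; exists a; rewrite /sigma_half /sandwich -!mulA !mul_idem1.
by rewrite !mul_idem2 !mul_absorb; split; apply: jleJ.
Qed.

Lemma sigma_absorb a b : sigma (a + a * b) a.
Proof.
apply/sigma_starE; exists a; split;
  last by apply: sandwich_jle; [apply: jleJ | apply: jleJ | apply: jleDl].
apply: jleD; first by apply: sandwich_jle; [apply: jleDl | apply: jleJ | apply: jleJ].
have shrink : sandwich (a + a * b) a a <=J a * (a * (a * (a * (a * b)))).
  by apply: jle_mul (jleDl _ _) _; do 3!apply: jle_mull; apply: jleDr.
by apply: (jleT shrink); rewrite !mul_idem1; apply: jleJ.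
Qed.

Lemma sigma_addr a b c : sigma a b -> sigma (a + c) (b + c).
Proof.
move/sigma_starE=> [x [Hab Hba]]; apply/sigma_starE.
by exists (c + x); split; apply: sigma_half_addr.
Qed.

Lemma sigma_mulr a b c : sigma a b -> sigma (a * c) (b * c).
Proof.
move/sigma_starE=> [x [Hab Hba]]; apply/sigma_starE.
by exists x; split; apply: sigma_half_mulr.
Qed.

Lemma sigma_addl a b c : sigma a b -> sigma (c + a) (c + b).
Proof.
move=> Hab; apply: sigma_trans (sigma_add_comm c a) _.
exact: sigma_trans (sigma_addr c Hab) (sigma_add_comm b c).
Qed.

Lemma sigma_mull a b c : sigma a b -> sigma (c * a) (c * b).
Proof.
move=> Hab; apply: sigma_trans (sigma_mul_comm c a) _.
exact: sigma_trans (sigma_mulr c Hab) (sigma_mul_comm b c).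
Qed.

Lemma sigma_dl_congruence : dl_congruence add mul sigma.
Proof.
split; first split; first split.
- exact: sigma_refl.
- exact: sigma_trans.
- exact: sigma_sym.
- split=> a b c d Hab Hcd.
  + exact: sigma_trans (sigma_addr c Hab) (sigma_addl b Hcd).
  + exact: sigma_trans (sigma_mulr c Hab) (sigma_mull b Hcd).
- by split; [|split]; [apply: sigma_add_comm | apply: sigma_mul_comm | apply: sigma_absorb].
Qed.

Section Least.
Variable rho : relation S.
Hypothesis Hrho : dl_congruence add mul rho.

#[local] Instance rho_Equivalence : Equivalence rho.
Proof. by case: Hrho => [[[]]]. Qed.

#[local] Instance add_rho_Proper : Proper (rho ==> rho ==> rho) add.
Proof. by case: Hrho => [[_ [Hadd _]] _] ? ? ? ? ? ?; apply: Hadd. Qed.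

#[local] Instance mul_rho_Proper : Proper (rho ==> rho ==> rho) mul.
Proof. by case: Hrho => [[_ [_ Hmul]] _] ? ? ? ? ? ?; apply: Hmul. Qed.

Let rho_addC a b : rho (a + b) (b + a).
Proof. by case: Hrho => [_ [addC _]]; apply: addC. Qed.
Let rho_mulC a b : rho (a * b) (b * a).
Proof. by case: Hrho => [_ [_ [mulC _]]]; apply: mulC. Qed.
Let rho_absorb a b : rho (a + a * b) a.
Proof. by case: Hrho => [_ [_ [_ absorb]]]; apply: absorb. Qed.

Lemma rho_mulCA a b c : rho (a * (b * c)) (b * (a * c)).
Proof. by rewrite !mulA (rho_mulC a b); reflexivity. Qed.

Lemma rho_jle_mul a y : a * y <=J a -> rho (a * y) a.
Proof.
move=> H; rewrite {1}H (rho_addC (a * y + a)) addA addI (rho_addC (a * y)).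
exact: rho_absorb.
Qed.

Lemma rho_sandwich a x b : rho (sandwich a x b) (a * (b * x)).
Proof.
rewrite /sandwich (rho_mulC x a) (rho_mulCA b a) (rho_mulCA x a) mulA mulI.
by rewrite (rho_mulCA x b) mulI; reflexivity.
Qed.

Lemma sigma_sub a b : sigma a b -> rho a b.
Proof.
move/sigma_starE=> [x [Hab Hba]].
transitivity (sandwich a x b); first by symmetry; apply: rho_jle_mul.
transitivity (sandwich b x a); last exact: rho_jle_mul.
by rewrite !rho_sandwich rho_mulCA; reflexivity.
Qed.

End Least.

End IdempotentSemiring.

Theorem theorem2p3 (S : Type) (add mul : S -> S -> S)
  (HS : idem_semiring add mul) :
  dl_congruence add mul (sigma_star add mul) /\
  (forall rho : relation S, dl_congruence add mul rho ->
     forall a b, sigma_star add mul a b -> rho a b).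
Proof.
split; first exact: sigma_dl_congruence.
by move=> rho Hrho a b; apply: sigma_sub.
Qed.
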